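(* Let $\{w^k\}$ be the sequence of points produced by Algorithm CMA Light (described in the context) applied to $f=\sum_{i=1}^P f_i$ under the standing assumptions. Then $\{w^k\}$ is bounded.
   Context: Standing assumptions: $f_1,\dots,f_P:\mathbb{R}^n\to\mathbb{R}$ are continuously differentiable and $f=\sum_{i=1}^P f_i$; (A1) for every $w_0$ the level set $\{w: f(w)\le f(w_0)\}$ is compact; (A2) each $\nabla f_p$ is Lipschitz continuous with a common constant $L>0$; (A3) each $f_p$ is nonnegative and has compact level sets. $\texttt{Inner\_Cycle}(w,\zeta)$: set $\widetilde w_0=w$; for $i=1,\dots,P$: $\tilde f_i=f_i(\widetilde w_{i-1})$, $\tilde d_i=-\nabla f_i(\widetilde w_{i-1})$, $\widetilde w_i=\widetilde w_{i-1}+\zeta\tilde d_i$; output $\widetilde w=\widetilde w_P$, $d=\sum_i\tilde d_i$, $\tilde f=\sum_i\tilde f_i$. $\texttt{EDFL\_Light}(F,w,d,\zeta;\gamma,\delta)$: set $j=0,\alpha=\zeta,f_0=F$. If $F>f(w)-\gamma\alpha\|d\|^2$ return $\alpha=0$. Otherwise, while $f(w+(\alpha/\delta)d)\le\min\{f(w)-\gamma\alpha\|d\|^2,f_j\}$ set $f_{j+1}=f(w+(\alpha/\delta)d)$, $j\leftarrow j+1$, $\alpha\leftarrow\alpha/\delta$. Return $\alpha$ and $f(w+\alpha d)$. Algorithm CMA Light: parameters $\zeta^0>0$, $\theta\in(0,1)$, $\tau>0$, $\gamma\in(0,1)$, $\delta\in(0,1)$; $w^0\in\mathbb{R}^n$;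 set $\tilde f^0=f(w^0)$, $\phi^0=\tilde f^0$. For $k=0,1,\dots$: (1) $(\widetilde w^k,d^k,\tilde f^{k+1})=\texttt{Inner\_Cycle}(w^k,\zeta^k)$. (2) If $\tilde f^{k+1}\le\min\{\phi^k-\gamma\zeta^k,f(w^0)\}$: set $\zeta^{k+1}=\zeta^k$, $\alpha^k=\zeta^k$, $\phi^{k+1}=\tilde f^{k+1}$. (3) Else, if $\|d^k\|\le\tau\zeta^k$: set $\zeta^{k+1}=\theta\zeta^k$, $\alpha^k=\zeta^k$ if $\tilde f^{k+1}\le f(w^0)$ and $\alpha^k=0$ otherwise, and $\phi^{k+1}=\phi^k$. (4) Else: $(\widetilde\alpha^k,\hat f^{k+1})=\texttt{EDFL\_Light}(\tilde f^{k+1},w^k,d^k,\zeta^k;\gamma,\delta)$. If $\widetilde\alpha^k\|d^k\|^2\le\tau\zeta^k$: $\zeta^{k+1}=\theta\zeta^k$ and $\alpha^k=\widetilde\alpha^k$ if $\widetilde\alpha^k>0$ and $\hat f^{k+1}\le f(w^0)$; $\alpha^k=\zeta^k$ if $\widetilde\alpha^k=0$ and $\tilde f^{k+1}\le f(w^0)$; $\alpha^k=0$ otherwise. Else: $\zeta^{k+1}=\zeta^k$ and $\alpha^k=\widetilde\alpha^k$ if $\widetilde\alpha^k>0$ and $\hat f^{k+1}\le f(w^0)$, $\alpha^k=0$ otherwise. In both subcases set $\phi^{k+1}=\min\{\hat f^{k+1},\tilde f^{k+1},\phi^k\}$. (5) Set $w^{k+1}=w^k+\alpha^k d^k$. *)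

From HB Require Import structures.
From mathcomp Require Import all_boot all_order all_algebra.
From mathcomp Require Import all_classical all_reals all_analysis.
Set Implicit Arguments. Unset Strict Implicit. Unset Printing Implicit Defensive.
Import Order.TTheory GRing.Theory Num.Theory.
Import numFieldNormedType.Exports.
Local Open Scope classical_set_scope.
Local Open Scope ring_scope.

Section CMA.
Variables (R : realType) (n P : nat).

Definition dotv (u v : 'rV[R]_n) : R := \sum_(j < n) u 0 j * v 0 j.
Definition sqnorm (v : 'rV[R]_n) : R := dotv v v.
Definition enorm (v : 'rV[R]_n) : R := Num.sqrt (sqnorm v).

Variables (fs : 'I_P -> 'rV[R]_n -> R) (grads : 'I_P -> 'rV[R]_n -> 'rV[R]_n).

Definition ftot (w : 'rV[R]_n) : R := \sum_(i < P) fs i w.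

(* Inner_Cycle(w, zeta): returns (tilde w, d, tilde f) *)
Definition inner_step (zeta : R) (s : 'rV[R]_n * 'rV[R]_n * R) (i : 'I_P) :=
  let: (w, d, fv) := s in
  (w - zeta *: grads i w, d - grads i w, fv + fs i w).

Definition inner_cycle (w : 'rV[R]_n) (zeta : R) : 'rV[R]_n * 'rV[R]_n * R :=
  foldl (inner_step zeta) (w, 0, 0) (enum 'I_P).

(* EDFL_Light(F, w, d, zeta; gamma, delta), as an input/output relation.
   Loop iteration i has current alpha = zeta/delta^i and stored value f_i,
   with f_0 = F and f_i = f(w + (zeta/delta^i) d) for i >= 1. The loop stops
   at the first j at which the test fails; output alpha = zeta/delta^j and
   fhat = f(w + alpha d). *)
Definition edfl_alpha (zeta delta : R) (i : nat) : R := zeta / delta ^+ i.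

Definition edfl_fj (F : R) (w d : 'rV[R]_n) (zeta delta : R) (i : nat) : R :=
  if i is 0 then F else ftot (w + edfl_alpha zeta delta i *: d).

Definition edfl_test (F : R) (w d : 'rV[R]_n) (zeta gamma delta : R) (i : nat)
  : Prop :=
  ftot (w + (edfl_alpha zeta delta i / delta) *: d) <=
  Num.min (ftot w - gamma * edfl_alpha zeta delta i * sqnorm d)
          (edfl_fj F w d zeta delta i).

Definition edfl_light (F : R) (w d : 'rV[R]_n) (zeta gamma delta : R)
  (alpha fhat : R) : Prop :=
  (F > ftot w - gamma * zeta * sqnorm d -> alpha = 0) /\
  (F <= ftot w - gamma * zeta * sqnorm d ->
     exists j : nat,
       (forall i, (i < j)%N -> edfl_test F w d zeta gamma delta i) /\
       ~ edfl_test F w d zeta gamma delta j /\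
       alpha = edfl_alpha zeta delta j) /\
  fhat = ftot (w + alpha *: d).

(* One iteration k -> k+1 of CMA Light; the state is (w^k, zeta^k, phi^k),
   f0 = f(w^0). *)
Definition cma_step (theta tau gamma delta f0 : R)
  (wk : 'rV[R]_n) (zk phik : R) (w1 : 'rV[R]_n) (z1 phi1 : R) : Prop :=
  let: (wt, d, ft) := inner_cycle wk zk in
  exists alpha : R,
    w1 = wk + alpha *: d /\
    (
      (ft <= Num.min (phik - gamma * zk) f0 /\
       z1 = zk /\ alpha = zk /\ phi1 = ft)
    \/
      (~ (ft <= Num.min (phik - gamma * zk) f0) /\ enorm d <= tau * zk /\
       z1 = theta * zk /\ alpha = (if ft <= f0 then zk else 0) /\
       phi1 = phik)
    \/
      (~ (ft <= Num.min (phik - gamma * zk) f0) /\ ~ (enorm d <= tau * zk) /\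
       exists alt fh : R,
         edfl_light ft wk d zk gamma delta alt fh /\
         phi1 = Num.min fh (Num.min ft phik) /\
         ( (alt * sqnorm d <= tau * zk /\ z1 = theta * zk /\
            alpha = (if (0 < alt) && (fh <= f0) then alt
                     else if (alt == 0) && (ft <= f0) then zk else 0))
         \/ (~ (alt * sqnorm d <= tau * zk) /\ z1 = zk /\
            alpha = (if (0 < alt) && (fh <= f0) then alt else 0))))).

End CMA.

(* Every iterate of CMA Light is the previous iterate, a point of the level set
   {f <= f(w^0)}, or the end point of an inner cycle whose accumulated value
   f~ = sum_i f_i(w~_(i-1)) is at most f(w^0).  If f(y) > f(w^0) for some y,
   then f~ < sum_i f_i(y) forces f_i(w~_(i-1)) <= f_i(y) for some i, so
   w~_(i-1) lies in a compact level set of f_i; the remaining incremental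
   gradient steps enlarge the norm at most affinely, because the gradients are
   Lipschitz and the stepsizes never exceed zeta^0.  If no such y exists, the
   whole space is the compact level set {f <= f(w^0)}. *)
From HB Require Import structures.
From mathcomp Require Import all_boot all_order all_algebra.
From mathcomp Require Import all_classical all_reals all_analysis.
From mathcomp Require Import zify.
Set Implicit Arguments.
Unset Strict Implicit.
Unset Printing Implicit Defensive.
Import Order.TTheory GRing.Theory Num.Theory.
Import numFieldNormedType.Exports.
Local Open Scope ring_scope.

Lemma compact_family_bounded (R : realType) (V : normedModType R)
    (I : finType) (A : I -> set V) :
  (forall i, compact (A i)) ->
  exists2 M, 0 <= M & forall i x, A i x -> `|x| <= M.
Proof.
move=> cA.
have /filter_ex[M HM] : \forall M \near +oo, forall i x, A i x -> `|x| <= M.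
  by apply: filter_forall => i; exact: compact_bounded.
exists (Num.max M 0); first by rewrite le_max lexx orbT.
by move=> i x /HM; rewrite le_max => ->.
Qed.

Section EuclideanNorm.
Variables (R : realType) (n : nat).
Implicit Types v : 'rV[R]_n.

Lemma mx_norm_le_enorm v : `|v| <= enorm v.
Proof.
change (mx_norm v <= enorm v); rewrite mx_normrE.
apply: bigmax_le => [|[i j] _] /=; first exact: sqrtr_ge0.
rewrite (ord1 i) -sqrtr_sqr; apply: ler_wsqrtr.
rewrite /sqnorm /dotv (bigD1 j) //= expr2 lerDl sumr_ge0 // => k _.
by rewrite -expr2 sqr_ge0.
Qed.

Lemma entry_le_mx_norm v j : `|v 0 j| <= `|v|.
Proof.
change (`|v 0 j| <= mx_norm v); rewrite mx_normrE.
exact: (le_bigmax _ (fun ij : 'I_1 * 'I_n => `|v ij.1 ij.2|) (0, j)).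
Qed.

Lemma enorm_le_mx_norm v : enorm v <= n%:R * `|v|.
Proof.
have n_v_ge0 : 0 <= n%:R * `|v| by rewrite mulr_ge0.
rewrite /enorm -(ger0_norm n_v_ge0) -sqrtr_sqr; apply: ler_wsqrtr.
apply: (@le_trans _ _ (\sum_(j < n) `|v| ^+ 2)).
  apply: ler_sum => j _; rewrite -expr2 -real_normK ?num_real //.
  by rewrite lerXn2r ?nnegrE ?entry_le_mx_norm.
rewrite sumr_const card_ord exprMn -[_ *+ n]mulr_natl.
by rewrite ler_wpM2r ?sqr_ge0 // -natrX ler_nat; nia.
Qed.

Lemma lipschitz_affine_growth (g : 'rV[R]_n -> 'rV[R]_n) (L : R) :
  0 <= L -> (forall u v, enorm (g u - g v) <= L * enorm (u - v)) ->
  forall v, `|g v| <= `|g 0| + L * n%:R * `|v|.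
Proof.
move=> L_ge0 g_lip v.
rewrite -[g v](subrK (g 0)) addrC (le_trans (ler_normD _ _)) // lerD2l.
rewrite (le_trans (mx_norm_le_enorm _)) // (le_trans (g_lip _ _)) // subr0.
by rewrite -mulrA ler_wpM2l // enorm_le_mx_norm.
Qed.

End EuclideanNorm.

Section InnerCycle.
Variables (R : realType) (n P : nat).
Variables (fs : 'I_P -> 'rV[R]_n -> R) (grads : 'I_P -> 'rV[R]_n -> 'rV[R]_n).

Lemma foldl_inner_step_point zeta v s a :
  a.1.1 = v + zeta *: a.1.2 ->
  (foldl (inner_step fs grads zeta) a s).1.1 =
    v + zeta *: (foldl (inner_step fs grads zeta) a s).1.2.
Proof.
elim: s a => //= i s IH [[x d] fv] /= ->; apply: IH => /=.
by rewrite scalerBr addrA.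
Qed.

Lemma inner_cycle_point v zeta :
  (inner_cycle fs grads v zeta).1.1 =
    v + zeta *: (inner_cycle fs grads v zeta).1.2.
Proof. by apply: foldl_inner_step_point => /=; rewrite scaler0 addr0. Qed.

Variables (zeta : R) (beta : R -> R) (B : R) (y : 'rV[R]_n).
Hypothesis step_le_beta : forall i x, `|x - zeta *: grads i x| <= beta `|x|.
Hypothesis beta_homo : {homo beta : r s / r <= s}.
Hypothesis beta_ge : forall r, 0 <= r -> r <= beta r.
Hypothesis B_ge0 : 0 <= B.
Hypothesis level_set_le_B : forall i x, fs i x <= fs i y -> `|x| <= B.

Lemma iter_beta_ge m : B <= iter m beta B.
Proof. by elim: m => //= m IH; rewrite (le_trans IH) ?beta_ge ?(le_trans B_ge0). Qed.

(* Invariant: either the current point is already trapped, or every f_i seen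
   so far exceeded f_i(y). *)
Lemma foldl_inner_step_bound s m T a :
  `|a.1.1| <= iter m beta B \/ T <= a.2 ->
  `|(foldl (inner_step fs grads zeta) a s).1.1| <= iter (m + size s) beta B \/
  T + \sum_(i <- s) fs i y <= (foldl (inner_step fs grads zeta) a s).2.
Proof.
elim: s m T a => [|i s IH] m T [[x d] fv] /=; first by rewrite addn0 big_nil addr0.
move=> trapped; rewrite big_cons addrA -addSnnS; apply: IH => /=.
have [x_le|fy_lt] := leP (fs i x) (fs i y).
  left; rewrite (le_trans (step_le_beta i x)) //= beta_homo //.
  exact: le_trans (level_set_le_B x_le) (iter_beta_ge m).
case: trapped => [x_le|T_le]; last by right; rewrite lerD // ltW.
by left; rewrite (le_trans (step_le_beta i x)) // beta_homo.
Qed.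

Lemma inner_cycle_bounded v :
  (inner_cycle fs grads v zeta).2 < ftot fs y ->
  `|(inner_cycle fs grads v zeta).1.1| <= iter P beta B.
Proof.
move=> ft_lt.
have := @foldl_inner_step_bound (enum 'I_P) 0 0 (v, 0, 0) (or_intror (lexx 0)).
rewrite add0n size_enum_ord add0r big_enum /= -/(inner_cycle fs grads v zeta).
by case=> // fy_le; move: (lt_le_trans ft_lt fy_le); rewrite ltxx.
Qed.

End InnerCycle.

Lemma inner_cycle_bounded_below_level (R : realType) (n P : nat)
    (fs : 'I_P -> 'rV[R]_n -> R) (grads : 'I_P -> 'rV[R]_n -> 'rV[R]_n)
    (L zeta0 : R) (y : 'rV[R]_n) :
  0 <= L -> (forall p u v, enorm (grads p u - grads p v) <= L * enorm (u - v)) ->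
  (forall p, compact [set x | fs p x <= fs p y]) -> 0 <= zeta0 ->
  exists M, forall v zeta, 0 <= zeta <= zeta0 ->
    (inner_cycle fs grads v zeta).2 < ftot fs y ->
    `|(inner_cycle fs grads v zeta).1.1| <= M.
Proof.
move=> L_ge0 grads_lip /compact_family_bounded[B B_ge0 level_le_B] zeta0_ge0.
pose G := \sum_(p < P) `|grads p 0|.
have G_ge0 : 0 <= G by rewrite sumr_ge0.
have grad0_le_G p : `|grads p 0| <= G by rewrite /G (bigD1 p) //= lerDl sumr_ge0.
pose beta r := r + zeta0 * (G + L * n%:R * r).
have beta_homo : {homo beta : r s / r <= s}.
  by move=> r s r_le; rewrite lerD // ler_wpM2l // lerD2l ler_wpM2l ?mulr_ge0.
have beta_ge r : 0 <= r -> r <= beta r.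
  by move=> r_ge0; rewrite lerDl mulr_ge0 // addr_ge0 // !mulr_ge0.
exists (iter P beta B) => v zeta /andP[zeta_ge0 zeta_le]; apply: inner_cycle_bounded => //.
move=> p x; rewrite (le_trans (ler_normB _ _)) // lerD2l normrZ ger0_norm //.
have grad_le : `|grads p x| <= G + L * n%:R * `|x|.
  by rewrite (le_trans (lipschitz_affine_growth L_ge0 (grads_lip p) x)) ?lerD2r.
rewrite (le_trans (ler_wpM2l zeta_ge0 grad_le)) // ler_wpM2r //.
exact: le_trans (normr_ge0 _) grad_le.
Qed.

Lemma cma_step_next (R : realType) (n P : nat)
    (fs : 'I_P -> 'rV[R]_n -> R) (grads : 'I_P -> 'rV[R]_n -> 'rV[R]_n)
    (theta tau gamma delta f0 : R) (wk w1 : 'rV[R]_n) (zk phik z1 phi1 : R) :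
  cma_step fs grads theta tau gamma delta f0 wk zk phik w1 z1 phi1 ->
  (z1 = zk \/ z1 = theta * zk) /\
  [\/ w1 = wk,
      w1 = (inner_cycle fs grads wk zk).1.1 /\ (inner_cycle fs grads wk zk).2 <= f0
    | ftot fs w1 <= f0].
Proof.
rewrite /cma_step; have := inner_cycle_point fs grads wk zk.
case: inner_cycle => [[wt d] ft] /= -> [alpha [-> step]].
have next_cases a : a = 0 \/ (a = zk /\ ft <= f0) \/ ftot fs (wk + a *: d) <= f0 ->
  [\/ wk + a *: d = wk, wk + a *: d = wk + zk *: d /\ ft <= f0
    | ftot fs (wk + a *: d) <= f0].
  by case=> [->|[[-> ft_le]|fw_le]]; [constructor 1; rewrite scale0r addr0
    | constructor 2 | constructor 3].
case: step => [[ft_le [-> [-> _]]]|[[_ [_ [-> [-> _]]]]|]].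
- split; [by left | apply: next_cases; right; left; split=> //].
  by move: ft_le; rewrite le_min => /andP[].
- by split; [right | apply: next_cases; case: ifP; [right; left | left]].
case=> _ [_ [alt [fh [[_ [_ ->]] [_ alpha_z1]]]]].
split; first by case: alpha_z1 => [[_ [-> _]]|[_ [-> _]]]; [right | left].
apply: next_cases.
case: alpha_z1 => [[_ [_ ->]]|[_ [_ ->]]]; case: ifP => [/andP[_ fw_le]|_];
  try by right; right.
- by case: ifP => [/andP[_ ft_le]|_]; [right; left | left].
- by left.
Qed.

Theorem lemma3 (R : realType) (n P : nat)
  (fs : 'I_P -> 'rV[R]_n -> R) (grads : 'I_P -> 'rV[R]_n -> 'rV[R]_n)
  (L : R)
  (* each f_p is continuously differentiable with gradient grads p *)
  (Hdiff : forall p w, differentiable (fs p) w /\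
             forall v, 'd (fs p) w v = dotv (grads p w) v)
  (Hcont : forall p, continuous (grads p))
  (* (A1) compact level sets of f *)
  (HA1 : forall w0, compact [set w | ftot fs w <= ftot fs w0])
  (* (A2) common Lipschitz constant for the gradients *)
  (HL : 0 < L)
  (HA2 : forall p w v,
     enorm (grads p w - grads p v) <= L * enorm (w - v))
  (* (A3) each f_p nonnegative with compact level sets *)
  (HA3 : forall p, (forall w, 0 <= fs p w) /\
     forall w0, compact [set w | fs p w <= fs p w0])
  (* parameters *)
  (zeta0 theta tau gamma delta : R)
  (Hzeta0 : 0 < zeta0) (Htheta : 0 < theta < 1) (Htau : 0 < tau)
  (Hgamma : 0 < gamma < 1) (Hdelta : 0 < delta < 1)
  (w0 : 'rV[R]_n)
  (* the sequences generated by CMA Light *)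
  (w : nat -> 'rV[R]_n) (zeta phi : nat -> R)
  (Hw0 : w 0%N = w0) (Hz0 : zeta 0%N = zeta0) (Hphi0 : phi 0%N = ftot fs w0)
  (Hstep : forall k, cma_step fs grads theta tau gamma delta (ftot fs w0)
             (w k) (zeta k) (phi k) (w k.+1) (zeta k.+1) (phi k.+1)) :
  exists M : R, forall k, enorm (w k) <= M.
Proof.
suff [M w_le] : exists M, forall k, `|w k| <= M.
  by exists (n%:R * M) => k; rewrite (le_trans (enorm_le_mx_norm _)) ?ler_wpM2l.
have [M0 _ level_le_M0] := compact_family_bounded (fun _ : unit => HA1 w0).
have [[y f0_lt_fy]|no_y] := pselect (exists y, ftot fs w0 < ftot fs y); last first.
  exists M0 => k; apply: (level_le_M0 tt) => /=; rewrite leNgt.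
  by apply/negP => fw_gt; apply: no_y; exists (w k).
have [Mi inner_le_Mi] := inner_cycle_bounded_below_level (ltW HL) HA2
  (fun p => (HA3 p).2 y) (ltW Hzeta0).
have zeta_bounds k : 0 < zeta k <= zeta0.
  elim: k => [|k /andP[zk_gt0 zk_le]]; first by rewrite Hz0 Hzeta0 lexx.
  have [[->|->] _] := cma_step_next (Hstep k); first by rewrite zk_gt0.
  case/andP: Htheta => theta_gt0 theta_lt1.
  by rewrite mulr_gt0 // (le_trans _ zk_le) // ler_piMl ?ltW.
exists (Num.max `|w0| (Num.max M0 Mi)).
elim=> [|k IH]; first by rewrite Hw0 le_max lexx.
have zk_ge0 : 0 <= zeta k <= zeta0 by case/andP: (zeta_bounds k) => /ltW -> ->.
have [_ [->|[-> ft_le]|fw_le]] := cma_step_next (Hstep k).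
- exact: IH.
- by rewrite !le_max inner_le_Mi ?orbT // (le_lt_trans ft_le).
- by rewrite !le_max (level_le_M0 tt) ?orbT.
Qed.
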